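(* If $a$ and $m$ are integers with $m>0$, then $m$ divides $(a^m-a)\,(m-1)!$. *)

From mathcomp Require Import all_boot all_order all_algebra.

(** If [m] is prime, [m] divides [a ^ m - a] by Fermat's little theorem.
    Otherwise [m = d * k] with [d] the least prime divisor, so [1 < d <= k < m]:
    when [d < k] both factors occur in [(m - 1)!], and when [k = d > 2] so do
    [d] and [2 d < d ^ 2 = m]. The only remaining case is [m = 4], where
    [a ^ 4 - a] and [3! = 6] are both even. *)

From mathcomp Require Import all_boot all_order all_algebra.
From mathcomp Require Import zify.
Import GRing.Theory Num.Theory.
Local Open Scope ring_scope.

Lemma fermat_littlez (a : int) [p : nat] : prime p -> (a ^+ p = a %[mod p])%Z.
Proof.
move=> p_pr; have p_neq0 : p%:Z != 0 by case: p p_pr.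
have := modz_ge0 a p_neq0; case ap: (a %% p)%Z => [n|//] _.
rewrite -modzXm ap -natz -natrX natz modz_nat (fermat_little n p_pr).
by rewrite -modz_nat -ap modz_mod ap natz.
Qed.

Lemma fact_dvdn [m n : nat] : (m <= n)%N -> (m`! %| n`!)%N.
Proof. by move=> le_mn; rewrite -(bin_fact le_mn) mulnCA dvdn_mulr. Qed.

Lemma dvdn_mul_fact i j n : (0 < i < j)%N -> (j <= n)%N -> (i * j %| n`!)%N.
Proof.
case/andP=> i_gt0 lt_ij le_jn; apply: dvdn_trans (fact_dvdn le_jn).
have j_gt0 : (0 < j)%N by apply: leq_ltn_trans lt_ij.
rewrite -(prednK j_gt0) factS prednK // mulnC dvdn_mul //.
by rewrite dvdn_fact // i_gt0 -ltnS prednK.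
Qed.

Lemma composite_dvdn_fact m :
  (1 < m)%N -> ~~ prime m -> m != 4%N -> (m %| (m.-1)`!)%N.
Proof.
move=> m_gt1 m_npr m_neq4; set d := pdiv m; set k := (m %/ d)%N.
have d_gt1 : (1 < d)%N by apply/prime_gt1/pdiv_prime.
have m_dk : m = (d * k)%N by rewrite mulnC divnK ?pdiv_dvd.
have le_d2m : (d ^ 2 <= m)%N.
  by rewrite leqNgt; apply: contra m_npr; apply: ltn_pdiv2_prime; lia.
have le_dk : (d <= k)%N by rewrite -(leq_pmul2l (ltnW d_gt1)) -m_dk mulnn.
have [lt_dk | le_kd] := ltnP d k.
  by rewrite {1}m_dk; apply: dvdn_mul_fact; nia.
have k_d : k = d by apply/eqP; rewrite eqn_leq le_kd le_dk.
have d_gt2 : (2 < d)%N.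
  by rewrite ltn_neqAle d_gt1 andbT; apply: contra_neq m_neq4 => d2; rewrite m_dk k_d -d2.
apply: (@dvdn_trans (d * (2 * d))%N).
  by rewrite m_dk k_d mulnCA dvdn_mull.
by apply: dvdn_mul_fact; nia.
Qed.

Lemma dvdz_exp4_sub (a : int) : (2 %| a ^+ 4 - a)%Z.
Proof.
rewrite -eqz_mod_dvd; apply/eqP.
by rewrite (exprM a 2 2) -modzXm (fermat_littlez a (isT : prime 2)) modzXm fermat_littlez.
Qed.

Theorem mainTheorem11 (a : int) (m : nat) (hm : (0 < m)%N) :
  (m%:Z %| (a ^+ m - a) * ((m.-1)`!)%:Z)%Z.
Proof.
have [m_gt1 | m_le1] := ltnP 1 m; last by have -> : m = 1%N by lia.
have [m_pr | m_npr] := boolP (prime m).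
  by rewrite dvdz_mulr // -eqz_mod_dvd; apply/eqP/fermat_littlez.
have [-> | m_neq4] := eqVneq m 4%N.
  by rewrite (_ : 4%:Z = 2 * 2) // dvdz_mul ?dvdz_exp4_sub.
by rewrite dvdz_mull // dvdzE composite_dvdn_fact.
Qed.
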